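(* Let $T$ be a bimonad on a left closed monoidal category $\mathcal C$. The following are equivalent: (i) $T$ is a left Hopf monad; (ii) the monoidal category $\mathcal C^T$ is left closed and the forgetful functor $U_T\colon\mathcal C^T\to\mathcal C$ is left closed; (iii) $T$ admits a left (binary) antipode. Moreover, in that case a left internal Hom of $T$-modules $(M,r),(N,t)$ is $([M,N]^l,\,[M,t]^l\,s^l_{M,N}\,T[r,N]^l)$ with evaluation $\mathrm{ev}^M_N$. (The analogous statement holds for right closed $\mathcal C$, right Hopf monads and right antipodes.)
   Context: Monoidal categories are strict. A bimonad on $\mathcal C$ is a monad $(T,\mu,\eta)$ with a comonoidal structure $T_2(X,Y)\colon T(X\otimes Y)\to TX\otimes TY$, $T_0\colon T\mathbb 1\to\mathbb 1$ (coassociative, counital) such that $\mu,\eta$ are comonoidal natural transformations. $\mathcal C^T$ is the category of $T$-modules, monoidal with $(M,r)\otimes(N,s)=(M\otimes N,(r\otimes s)T_2(M,N))$, unit $(\mathbb 1,T_0)$; $U_T$ is strict monoidal. $T$ is a left Hopf monad if $H^l_{X,Y}=(TX\otimes\mu_Y)T_2(X,TY)\colon T(X\otimes TY)\to TX\otimes TY$ is invertible for all $X,Y$. A monoidal category is left closed if each $?\otimes X$ has a right adjoint $[X,?]^l$, with counit $\mathrm{ev}^X_Y\colon[X,Y]^l\otimes X\to Y$ and unit $\mathrm{coev}^X_Y\colon Y\to[X,Y\otimes X]^l$; $[-,-]^l$ is a functor $\mathcal C^{op}\times\mathcal C\to\mathcal C$. A strong monoidal functor $U$ is left closed if the canonical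 maps $U[X,Y]^l\to[UX,UY]^l$ (adjoint to $U(\mathrm{ev}^X_Y)U_2([X,Y]^l,X)$) are isomorphisms. A left (binary) antipode for $T$ is a natural transformation $s^l_{X,Y}\colon T[TX,Y]^l\to[X,TY]^l$ such that for all $X,Y$: (1) $T\big(\mathrm{ev}^X_Y([\eta_X,Y]^l\otimes X)\big)=\mathrm{ev}^{TX}_{TY}\big(s^l_{TX,Y}\,T[\mu_X,Y]^l\otimes TX\big)T_2([TX,Y]^l,X)$; (2) $[X,TY\otimes\eta_X]^l\,\mathrm{coev}^X_{TY}=[X,(TY\otimes\mu_X)T_2(Y,TX)]^l\,s^l_{X,Y\otimes TX}\,T(\mathrm{coev}^{TX}_Y)$. *)

Set Implicit Arguments.
Unset Strict Implicit.

Definition cast {O : Type} {H : O -> O -> Type} {A A' B B' : O}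
  (e1 : A = A') (e2 : B = B') (f : H A B) : H A' B' :=
  match e1 in _ = A1, e2 in _ = B1 return H A1 B1 with eq_refl, eq_refl => f end.

Record SMCat := {
  Ob : Type;
  Hom : Ob -> Ob -> Type;
  idm : forall A, Hom A A;
  comp : forall A B C, Hom B C -> Hom A B -> Hom A C;
  comp_idl : forall A B (f : Hom A B), comp (idm B) f = f;
  comp_idr : forall A B (f : Hom A B), comp f (idm A) = f;
  comp_assoc : forall A B C D (h : Hom C D) (g : Hom B C) (f : Hom A B),
      comp h (comp g f) = comp (comp h g) f;
  tens : Ob -> Ob -> Ob;
  tensm : forall A A' B B', Hom A A' -> Hom B B' -> Hom (tens A B) (tens A' B');
  tensm_id : forall A B, tensm (idm A) (idm B) = idm (tens A B);
  tensm_comp : forall A A' A'' B B' B'' (f : Hom A A') (f' : Hom A' A'')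
      (g : Hom B B') (g' : Hom B' B''),
      tensm (comp f' f) (comp g' g) = comp (tensm f' g') (tensm f g);
  unit : Ob;
  tens_assoc : forall A B C, tens (tens A B) C = tens A (tens B C);
  tens_unitl : forall A, tens unit A = A;
  tens_unitr : forall A, tens A unit = A;
  tensm_assoc : forall A A' B B' C C' (f : Hom A A') (g : Hom B B') (h : Hom C C'),
      @cast _ Hom _ _ _ _ (tens_assoc A B C) (tens_assoc A' B' C') (tensm (tensm f g) h)
      = tensm f (tensm g h);
  tensm_unitl : forall A A' (f : Hom A A'),
      @cast _ Hom _ _ _ _ (tens_unitl A) (tens_unitl A') (tensm (idm unit) f) = f;
  tensm_unitr : forall A A' (f : Hom A A'),
      @cast _ Hom _ _ _ _ (tens_unitr A) (tens_unitr A') (tensm f (idm unit)) = f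
}.

Arguments Hom {s} _ _.
Arguments idm {s} A.
Arguments comp {s A B C} _ _.
Arguments tens {s} _ _.
Arguments tensm {s A A' B B'} _ _.
Arguments unit {s}.
Arguments tens_assoc {s} A B C.
Arguments tens_unitl {s} A.
Arguments tens_unitr {s} A.

Notation "g ∘ f" := (comp g f) (at level 40, left associativity).
Notation "f ⊗ g" := (tensm f g) (at level 35).

Record Bimonad (C : SMCat) := {
  BT : Ob C -> Ob C;
  BTm : forall A B : Ob C, Hom A B -> Hom (BT A) (BT B);
  BTm_id : forall A, BTm (idm A) = idm (BT A);
  BTm_comp : forall A B D (f : Hom A B) (g : Hom B D), BTm (g ∘ f) = BTm g ∘ BTm f;
  Bmu : forall A, Hom (BT (BT A)) (BT A);
  Beta : forall A, Hom A (BT A);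
  Bmu_nat : forall A B (f : Hom A B), BTm f ∘ Bmu A = Bmu B ∘ BTm (BTm f);
  Beta_nat : forall A B (f : Hom A B), BTm f ∘ Beta A = Beta B ∘ f;
  Bmu_assoc : forall A, Bmu A ∘ BTm (Bmu A) = Bmu A ∘ Bmu (BT A);
  Bmu_etal : forall A, Bmu A ∘ Beta (BT A) = idm (BT A);
  Bmu_etar : forall A, Bmu A ∘ BTm (Beta A) = idm (BT A);
  BT2 : forall A B, Hom (BT (tens A B)) (tens (BT A) (BT B));
  BT0 : Hom (BT unit) unit;
  BT2_nat : forall A A' B B' (f : Hom A A') (g : Hom B B'),
      (BTm f ⊗ BTm g) ∘ BT2 A B = BT2 A' B' ∘ BTm (f ⊗ g);
  BT2_coassoc : forall X Y Z,
      @cast _ (@Hom C) _ _ _ _ (f_equal BT (tens_assoc X Y Z))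
            (tens_assoc (BT X) (BT Y) (BT Z))
            ((BT2 X Y ⊗ idm (BT Z)) ∘ BT2 (tens X Y) Z)
      = (idm (BT X) ⊗ BT2 Y Z) ∘ BT2 X (tens Y Z);
  BT2_counitl : forall X,
      @cast _ (@Hom C) _ _ _ _ (f_equal BT (tens_unitl X)) (tens_unitl (BT X))
            ((BT0 ⊗ idm (BT X)) ∘ BT2 unit X) = idm (BT X);
  BT2_counitr : forall X,
      @cast _ (@Hom C) _ _ _ _ (f_equal BT (tens_unitr X)) (tens_unitr (BT X))
            ((idm (BT X) ⊗ BT0) ∘ BT2 X unit) = idm (BT X);
  Bmu_T2 : forall X Y,
      BT2 X Y ∘ Bmu (tens X Y) = (Bmu X ⊗ Bmu Y) ∘ BT2 (BT X) (BT Y) ∘ BTm (BT2 X Y);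
  Bmu_T0 : BT0 ∘ Bmu unit = BT0 ∘ BTm BT0;
  Beta_T2 : forall X Y, BT2 X Y ∘ Beta (tens X Y) = Beta X ⊗ Beta Y;
  Beta_T0 : BT0 ∘ Beta unit = idm unit
}.

Arguments BT {C} b _.
Arguments BTm {C} b {A B} _.
Arguments Bmu {C} b A.
Arguments Beta {C} b A.
Arguments BT2 {C} b A B.
Arguments BT0 {C} b.

(* A left closed structure: a right adjoint [X,-]^l of (- ⊗ X), given by
   internal homs, evaluations and the (bijective) currying. *)
Record LeftClosed (C : SMCat) := {
  ihom : Ob C -> Ob C -> Ob C;
  ev : forall X Y : Ob C, Hom (tens (ihom X Y) X) Y;
  curry : forall X Y Z : Ob C, Hom (tens Z X) Y -> Hom Z (ihom X Y);
  ev_curry : forall X Y Z (f : Hom (tens Z X) Y), ev X Y ∘ (curry f ⊗ idm X) = f;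
  curry_ev : forall X Y Z (g : Hom Z (ihom X Y)), curry (ev X Y ∘ (g ⊗ idm X)) = g
}.

Arguments ihom {C} l X Y.
Arguments ev {C} l X Y.
Arguments curry {C} l {X Y Z} _.

Section Defs.
Context {C : SMCat} (L : LeftClosed C) (T : Bimonad C).

Definition ihom_map {X X' Y Y' : Ob C} (f : Hom X' X) (g : Hom Y Y')
  : Hom (ihom L X Y) (ihom L X' Y') :=
  curry L (g ∘ ev L X Y ∘ (idm (ihom L X Y) ⊗ f)).

Definition coev (X Y : Ob C) : Hom Y (ihom L X (tens Y X)) :=
  curry L (idm (tens Y X)).

Definition is_iso {A B : Ob C} (f : Hom A B) : Prop :=
  exists g : Hom B A, g ∘ f = idm A /\ f ∘ g = idm B.

Definition is_module (M : Ob C) (r : Hom (BT T M) M) : Prop :=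
  r ∘ Beta T M = idm M /\ r ∘ BTm T r = r ∘ Bmu T M.

Definition is_mod_hom (M : Ob C) (r : Hom (BT T M) M) (N : Ob C) (t : Hom (BT T N) N)
  (f : Hom M N) : Prop := t ∘ BTm T f = f ∘ r.

Definition tens_act (M : Ob C) (r : Hom (BT T M) M) (N : Ob C) (s : Hom (BT T N) N)
  : Hom (BT T (tens M N)) (tens M N) := (r ⊗ s) ∘ BT2 T M N.

Definition is_left_ihom_EM (M : Ob C) (r : Hom (BT T M) M) (N : Ob C) (t : Hom (BT T N) N)
  (H : Ob C) (h : Hom (BT T H) H) (e : Hom (tens H M) N) : Prop :=
  is_module h /\ is_mod_hom (tens_act h r) t e /\
  forall (Z : Ob C) (z : Hom (BT T Z) Z), is_module z ->
  forall f : Hom (tens Z M) N, is_mod_hom (tens_act z r) t f ->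
  exists g : Hom Z H, is_mod_hom z h g /\ e ∘ (g ⊗ idm M) = f /\
    forall g' : Hom Z H, is_mod_hom z h g' -> e ∘ (g' ⊗ idm M) = f -> g' = g.

Definition is_left_Hopf : Prop :=
  forall X Y : Ob C, is_iso ((idm (BT T X) ⊗ Bmu T Y) ∘ BT2 T X (BT T Y)).

(* (ii) C^T is left closed and U_T is left closed: for all modules (M,r),(N,t)
   there is a left internal Hom ((H,h),e) in C^T such that the canonical map
   U_T H -> [U_T M, U_T N]^l (adjoint to U_T(e), U_T being strict) is an iso. *)
Definition EM_left_closed_and_U_left_closed : Prop :=
  forall (M : Ob C) (r : Hom (BT T M) M), is_module r ->
  forall (N : Ob C) (t : Hom (BT T N) N), is_module t ->
  exists (H : Ob C) (h : Hom (BT T H) H) (e : Hom (tens H M) N),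
    is_left_ihom_EM r t h e /\ is_iso (curry L e).

Definition is_left_antipode
  (s : forall X Y : Ob C, Hom (BT T (ihom L (BT T X) Y)) (ihom L X (BT T Y))) : Prop :=
  (forall X X' Y (f : Hom X' X),
      s X' Y ∘ BTm T (ihom_map (BTm T f) (idm Y)) = ihom_map f (idm (BT T Y)) ∘ s X Y) /\
  (forall X Y Y' (g : Hom Y Y'),
      s X Y' ∘ BTm T (ihom_map (idm (BT T X)) g) = ihom_map (idm X) (BTm T g) ∘ s X Y) /\
  (forall X Y,
      BTm T (ev L X Y ∘ (ihom_map (Beta T X) (idm Y) ⊗ idm X))
      = ev L (BT T X) (BT T Y)
        ∘ ((s (BT T X) Y ∘ BTm T (ihom_map (Bmu T X) (idm Y))) ⊗ idm (BT T X))
        ∘ BT2 T (ihom L (BT T X) Y) X) /\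
  (forall X Y,
      ihom_map (idm X) (idm (BT T Y) ⊗ Beta T X) ∘ coev X (BT T Y)
      = ihom_map (idm X) ((idm (BT T Y) ⊗ Bmu T X) ∘ BT2 T Y (BT T X))
        ∘ s X (tens Y (BT T X)) ∘ BTm T (coev (BT T X) Y)).

Definition has_left_antipode : Prop :=
  exists s, is_left_antipode s.

End Defs.

(* The fusion operator H^l_{X,Y} = (TX ⊗ μ_Y) T_2(X,TY) and the antipode determine each
   other. Given an antipode s, the mate of s_{TY, X⊗TY} T[μ_Y, -] T(coev) is inverse to
   H^l: axiom (2) gives one composite and axiom (1) the other. Conversely the mate of
   T(ev) (H^l)^{-1} (1 ⊗ η) is an antipode.
   For modules (M,r), (N,t), axiom (1) says precisely that ev : [M,N]^l ⊗ M -> N is a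
   module morphism for the action [M,t] s T[r,N]. Any such action is automatically
   associative and makes the mates of module morphisms module morphisms, because when T
   is Hopf the map (1 ⊗ r) T_2(Z,M) : T(Z ⊗ M) -> TZ ⊗ M has a section built from
   (H^l)^{-1}; the comparison map to [M,N]^l is then the identity.
   Finally, if C^T is left closed over U_T, the universal property of the internal Hom of
   free modules from (TY, μ_Y) to T(X ⊗ TY) and to TX ⊗ TY yields an inverse of H^l. *)

From Stdlib Require Import ssreflect ClassicalEpsilon.

Ltac right_assoc := rewrite -?comp_assoc.

(* [rewrite_chain E] rewrites with [E : l = r] between composites, up to associativity:
   both sides are right-associated and [l] is also matched as a prefix [l ∘ y]. *)
Ltac chain_app l y :=
  lazymatch l with
  | ?a ∘ ?b => let r := chain_app b y in constr:(a ∘ r)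
  | _ => constr:(l ∘ y)
  end.
Ltac rewrite_chain E :=
  let E0 := fresh "E0" in pose proof E as E0; rewrite -?comp_assoc in E0;
  lazymatch type of E0 with @eq (@Hom ?s ?A ?B) ?l ?r =>
   let E1 := fresh "E1" in
   eassert (E1 : forall (D : Ob s) (y : Hom D A), _ = r ∘ y);
   [ let y0 := fresh "y" in intros ? y0; let t := chain_app l y0 in
     refine (_ : t = r ∘ y0); transitivity (l ∘ y0);
     [rewrite -?comp_assoc; reflexivity | rewrite E0; reflexivity]
   | rewrite -?comp_assoc; first [rewrite E1 | rewrite E0]; clear E1 E0; rewrite -?comp_assoc ]
  end.
Ltac rewrite_chain_rev E := rewrite_chain (eq_sym E).

Section Monoidal.
Context {C : SMCat}.

Lemma comp_tensm {A A' A'' B B' B'' : Ob C} (f : Hom A A') (f' : Hom A' A'')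
  (g : Hom B B') (g' : Hom B' B'') :
  f' ⊗ g' ∘ f ⊗ g = (f' ∘ f) ⊗ (g' ∘ g).
Proof. by rewrite tensm_comp. Qed.

Lemma comp_tensm_r {A A' A'' B B' B'' D : Ob C} (f : Hom A A') (f' : Hom A' A'')
  (g : Hom B B') (g' : Hom B' B'') (y : Hom D _) :
  f' ⊗ g' ∘ (f ⊗ g ∘ y) = (f' ∘ f) ⊗ (g' ∘ g) ∘ y.
Proof. by rewrite comp_assoc tensm_comp. Qed.

Lemma tensm_interchange {A A' B B' : Ob C} (f : Hom A A') (g : Hom B B') :
  idm A' ⊗ g ∘ f ⊗ idm B = f ⊗ idm B' ∘ idm A ⊗ g.
Proof. by rewrite !comp_tensm !comp_idl !comp_idr. Qed.

Lemma tensm_comp_idr {A A' A'' B : Ob C} (f : Hom A' A'') (g : Hom A A') :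
  (f ∘ g) ⊗ idm B = f ⊗ idm B ∘ g ⊗ idm B.
Proof. by rewrite comp_tensm comp_idl. Qed.

Lemma tensm_comp_first {A A' A'' B B' : Ob C} (f : Hom A' A'') (g : Hom A A') (h : Hom B B') :
  (f ∘ g) ⊗ h = f ⊗ idm B' ∘ g ⊗ h.
Proof. by rewrite comp_tensm comp_idl. Qed.

Lemma tensm_comp_last {A A' A'' B B' : Ob C} (f : Hom A' A'') (g : Hom A A') (h : Hom B B') :
  (f ∘ g) ⊗ h = f ⊗ h ∘ g ⊗ idm B.
Proof. by rewrite comp_tensm comp_idr. Qed.

Lemma inverse_nat {A B A' B' : Ob C} (f : Hom A B) (g : Hom B A) (f' : Hom A' B')
  (g' : Hom B' A') (k : Hom A A') (m : Hom B B') :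
  f ∘ g = idm _ -> g' ∘ f' = idm _ -> f' ∘ k = m ∘ f -> k ∘ g = g' ∘ m.
Proof.
  move=> fg g'f' nat_k. rewrite -(comp_idl (k ∘ g)) -g'f'. right_assoc.
  rewrite_chain nat_k. by rewrite fg comp_idr.
Qed.

End Monoidal.

Ltac tensor_norm :=
  repeat (right_assoc; rewrite ?comp_tensm_r ?comp_tensm ?BTm_id ?tensm_id ?comp_idl ?comp_idr;
          right_assoc).

Section Closed.
Context {C : SMCat} (L : LeftClosed C).

Lemma ev_curry_comp {X Y Z D : Ob C} (f : Hom (tens Z X) Y) (g : Hom D Z) :
  ev L X Y ∘ ((curry L f ∘ g) ⊗ idm X) = f ∘ (g ⊗ idm X).
Proof. by rewrite -{1}(comp_idl (idm X)) -comp_tensm comp_assoc ev_curry. Qed.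

Lemma curry_comp {X Y Z D : Ob C} (f : Hom (tens Z X) Y) (g : Hom D Z) :
  curry L f ∘ g = curry L (f ∘ (g ⊗ idm X)).
Proof. by rewrite -ev_curry_comp curry_ev. Qed.

Lemma curry_ev_idm (X Y : Ob C) : curry L (ev L X Y) = idm _.
Proof. rewrite -{1}(comp_idr (ev L X Y)) -tensm_id. exact: curry_ev. Qed.

Lemma ev_inj {X Y Z : Ob C} (f g : Hom Z (ihom L X Y)) :
  ev L X Y ∘ (f ⊗ idm X) = ev L X Y ∘ (g ⊗ idm X) -> f = g.
Proof. move=> E. by rewrite -(curry_ev f) E curry_ev. Qed.

Lemma ev_ihom_map {X X' Y Y' : Ob C} (f : Hom X' X) (g : Hom Y Y') :
  ev L X' Y' ∘ (ihom_map L f g ⊗ idm X') = g ∘ ev L X Y ∘ (idm _ ⊗ f).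
Proof. by rewrite /ihom_map ev_curry. Qed.

Lemma ev_coev {X Y : Ob C} : ev L X (tens Y X) ∘ (coev L X Y ⊗ idm X) = idm _.
Proof. by rewrite /coev ev_curry. Qed.

Lemma ihom_map_curry {X X' Y Y' Z : Ob C} (f : Hom X' X) (g : Hom Y Y')
  (k : Hom (tens Z X) Y) :
  ihom_map L f g ∘ curry L k = curry L (g ∘ k ∘ (idm _ ⊗ f)).
Proof.
  rewrite /ihom_map curry_comp. f_equal. right_assoc.
  rewrite_chain (tensm_interchange (curry L k) f). by rewrite_chain (ev_curry L k).
Qed.

Lemma ihom_map_coev {X X' Y Y' : Ob C} (f : Hom X' X) (g : Hom (tens Y X) Y') :
  ihom_map L f g ∘ coev L X Y = curry L (g ∘ (idm _ ⊗ f)).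
Proof. by rewrite /coev ihom_map_curry comp_idr. Qed.

Lemma ihom_map_comp {X X' X'' Y Y' Y'' : Ob C} (f : Hom X' X) (g : Hom Y Y')
  (f' : Hom X'' X') (g' : Hom Y' Y'') :
  ihom_map L f' g' ∘ ihom_map L f g = ihom_map L (f ∘ f') (g' ∘ g).
Proof. rewrite {1}/ihom_map ihom_map_curry /ihom_map. f_equal. by tensor_norm. Qed.

Lemma ihom_map_comp_r {X X' X'' Y Y' Y'' D : Ob C} (f : Hom X' X) (g : Hom Y Y')
  (f' : Hom X'' X') (g' : Hom Y' Y'') (y : Hom D _) :
  ihom_map L f' g' ∘ (ihom_map L f g ∘ y) = ihom_map L (f ∘ f') (g' ∘ g) ∘ y.
Proof. by rewrite comp_assoc ihom_map_comp. Qed.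

Lemma ihom_map_id_comp {Z Y Y' Y'' : Ob C} (g : Hom Y' Y'') (h : Hom Y Y') :
  ihom_map L (idm Z) (g ∘ h) = ihom_map L (idm Z) g ∘ ihom_map L (idm Z) h.
Proof. by rewrite ihom_map_comp comp_idl. Qed.

Lemma ihom_map_id {X Y : Ob C} : ihom_map L (idm X) (idm Y) = idm _.
Proof. rewrite /ihom_map comp_idl. exact: (curry_ev (idm _)). Qed.

Lemma ev_post {X Y Y' Z : Ob C} (g : Hom Y Y') (a : Hom Z (ihom L X Y)) :
  g ∘ ev L X Y ∘ (a ⊗ idm X) = ev L X Y' ∘ ((ihom_map L (idm X) g ∘ a) ⊗ idm X).
Proof. rewrite tensm_comp_idr. rewrite_chain (ev_ihom_map (idm X) g). by tensor_norm. Qed.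

Lemma ev_pre {X X' Y Z : Ob C} (f : Hom X' X) (a : Hom Z (ihom L X Y)) :
  ev L X Y ∘ (a ⊗ f) = ev L X' Y ∘ ((ihom_map L f (idm Y) ∘ a) ⊗ idm X').
Proof.
  rewrite tensm_comp_idr. rewrite_chain (ev_ihom_map f (idm Y)). rewrite comp_idl.
  by tensor_norm.
Qed.

Lemma ev_pre_id {X X' Y : Ob C} (f : Hom X' X) :
  ev L X Y ∘ (idm _ ⊗ f) = ev L X' Y ∘ (ihom_map L f (idm Y) ⊗ idm X').
Proof. by rewrite ev_ihom_map comp_idl. Qed.

End Closed.

Section Bimonad.
Context {C : SMCat} (T : Bimonad C).

Definition fusion (X Y : Ob C) : Hom (BT T (tens X (BT T Y))) (tens (BT T X) (BT T Y)) :=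
  (idm (BT T X) ⊗ Bmu T Y) ∘ BT2 T X (BT T Y).

Lemma BTm_comp_r {A B D E : Ob C} (g : Hom B D) (f : Hom A B) (y : Hom E _) :
  BTm T g ∘ (BTm T f ∘ y) = BTm T (g ∘ f) ∘ y.
Proof. by rewrite comp_assoc BTm_comp. Qed.

Lemma BT2_natl {A A' B : Ob C} (f : Hom A A') :
  (BTm T f ⊗ idm (BT T B)) ∘ BT2 T A B = BT2 T A' B ∘ BTm T (f ⊗ idm B).
Proof. by rewrite -BT2_nat BTm_id. Qed.

Lemma BT2_natr {A B B' : Ob C} (g : Hom B B') :
  (idm (BT T A) ⊗ BTm T g) ∘ BT2 T A B = BT2 T A B' ∘ BTm T (idm A ⊗ g).
Proof. by rewrite -BT2_nat BTm_id. Qed.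

Lemma free_module X : is_module (Bmu T X).
Proof. split; [exact: Bmu_etal | exact: Bmu_assoc]. Qed.

Lemma tens_module {A B : Ob C} {r : Hom (BT T A) A} {s : Hom (BT T B) B} :
  is_module r -> is_module s -> is_module (tens_act r s).
Proof.
  case=> r_eta r_mu [s_eta s_mu]. rewrite /tens_act. split.
  - right_assoc. by rewrite Beta_T2 comp_tensm r_eta s_eta tensm_id.
  - rewrite BTm_comp. right_assoc. rewrite_chain_rev (BT2_nat T r s). tensor_norm.
    rewrite r_mu s_mu -comp_tensm. right_assoc. by rewrite_chain_rev (Bmu_T2 T A B).
Qed.

Lemma idm_mod_hom {A : Ob C} (r : Hom (BT T A) A) : is_mod_hom r r (idm A).
Proof. by rewrite /is_mod_hom BTm_id comp_idr comp_idl. Qed.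

Lemma mod_hom_comp {A B D : Ob C} (r : Hom (BT T A) A) (s : Hom (BT T B) B)
  (t : Hom (BT T D) D) (f : Hom A B) (g : Hom B D) :
  is_mod_hom r s f -> is_mod_hom s t g -> is_mod_hom r t (g ∘ f).
Proof.
  rewrite /is_mod_hom BTm_comp => f_hom g_hom. rewrite_chain g_hom. by rewrite_chain f_hom.
Qed.

Lemma tensm_mod_hom {A A' B B' : Ob C} (r : Hom (BT T A) A) (r' : Hom (BT T A') A')
  (s : Hom (BT T B) B) (s' : Hom (BT T B') B') (f : Hom A A') (g : Hom B B') :
  is_mod_hom r r' f -> is_mod_hom s s' g -> is_mod_hom (tens_act r s) (tens_act r' s') (f ⊗ g).
Proof.
  rewrite /is_mod_hom /tens_act => f_hom g_hom. rewrite_chain_rev (BT2_nat T f g).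
  tensor_norm. by rewrite f_hom g_hom.
Qed.

Lemma free_hom_eq {A N : Ob C} {t : Hom (BT T N) N} {f : Hom (BT T A) N} :
  is_mod_hom (Bmu T A) t f -> f = t ∘ BTm T (f ∘ Beta T A).
Proof. move=> f_hom. by rewrite BTm_comp comp_assoc f_hom -comp_assoc Bmu_etar comp_idr. Qed.

Lemma fusion_natl {A A' Z : Ob C} (g : Hom A A') :
  fusion A' Z ∘ BTm T (g ⊗ idm (BT T Z)) = (BTm T g ⊗ idm _) ∘ fusion A Z.
Proof. rewrite /fusion. rewrite_chain_rev (BT2_nat T g (idm (BT T Z))). by tensor_norm. Qed.

Lemma fusion_natr {A X X' : Ob C} (f : Hom X' X) :
  fusion A X ∘ BTm T (idm A ⊗ BTm T f) = (idm _ ⊗ BTm T f) ∘ fusion A X'.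
Proof.
  rewrite /fusion. rewrite_chain_rev (BT2_nat T (idm A) (BTm T f)). tensor_norm.
  by rewrite Bmu_nat.
Qed.

Lemma fusion_mu {A X : Ob C} :
  fusion A X ∘ BTm T (idm A ⊗ Bmu T X) = (idm _ ⊗ Bmu T X) ∘ fusion A (BT T X).
Proof.
  rewrite /fusion. rewrite_chain_rev (BT2_nat T (idm A) (Bmu T X)). tensor_norm.
  by rewrite Bmu_assoc.
Qed.

Lemma fusion_Teta {A X : Ob C} : fusion A X ∘ BTm T (idm A ⊗ Beta T X) = BT2 T A X.
Proof.
  rewrite /fusion. rewrite_chain_rev (BT2_nat T (idm A) (Beta T X)). tensor_norm.
  by rewrite Bmu_etar tensm_id comp_idl.
Qed.

Lemma fusion_eta {A X : Ob C} : fusion A X ∘ Beta T (tens A (BT T X)) = Beta T A ⊗ idm _.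
Proof. rewrite /fusion. rewrite_chain (Beta_T2 T A (BT T X)). tensor_norm. by rewrite Bmu_etal. Qed.

Lemma fusion_mod_hom {A X : Ob C} :
  is_mod_hom (Bmu T _) (tens_act (Bmu T A) (Bmu T X)) (fusion A X).
Proof.
  rewrite /is_mod_hom /fusion /tens_act. rewrite_chain (Bmu_T2 T A (BT T X)). rewrite BTm_comp.
  rewrite_chain_rev (BT2_nat T (idm (BT T A)) (Bmu T X)). tensor_norm. by rewrite Bmu_assoc.
Qed.

End Bimonad.

Section LeftHopf.
Context {C : SMCat} (L : LeftClosed C) (T : Bimonad C) (HH : is_left_Hopf T).

Definition fusion_inv X Y : Hom (tens (BT T X) (BT T Y)) (BT T (tens X (BT T Y))) :=
  proj1_sig (constructive_indefinite_description _ (HH X Y)).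

Lemma fusion_inv_l X Y : fusion_inv X Y ∘ fusion T X Y = idm _.
Proof. rewrite /fusion_inv. by case: constructive_indefinite_description => g []. Qed.

Lemma fusion_inv_r X Y : fusion T X Y ∘ fusion_inv X Y = idm _.
Proof. rewrite /fusion_inv. by case: constructive_indefinite_description => g []. Qed.

Lemma fusion_inv_natl {A A' Z : Ob C} (g : Hom A A') :
  BTm T (g ⊗ idm (BT T Z)) ∘ fusion_inv A Z = fusion_inv A' Z ∘ (BTm T g ⊗ idm _).
Proof. apply: inverse_nat (fusion_inv_r _ _) (fusion_inv_l _ _) _. exact: fusion_natl. Qed.

Lemma fusion_inv_natr {A X X' : Ob C} (f : Hom X' X) :
  BTm T (idm A ⊗ BTm T f) ∘ fusion_inv A X' = fusion_inv A X ∘ (idm _ ⊗ BTm T f).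
Proof. apply: inverse_nat (fusion_inv_r _ _) (fusion_inv_l _ _) _. exact: fusion_natr. Qed.

Lemma fusion_inv_mu {A X : Ob C} :
  BTm T (idm A ⊗ Bmu T X) ∘ fusion_inv A (BT T X) = fusion_inv A X ∘ (idm _ ⊗ Bmu T X).
Proof. apply: inverse_nat (fusion_inv_r _ _) (fusion_inv_l _ _) _. exact: fusion_mu. Qed.

Lemma fusion_inv_T2 {A X : Ob C} : fusion_inv A X ∘ BT2 T A X = BTm T (idm A ⊗ Beta T X).
Proof. by rewrite -fusion_Teta comp_assoc fusion_inv_l comp_idl. Qed.

Definition hopf_antipode X Y : Hom (BT T (ihom L (BT T X) Y)) (ihom L X (BT T Y)) :=
  curry L (BTm T (ev L (BT T X) Y) ∘ fusion_inv (ihom L (BT T X) Y) X ∘ (idm _ ⊗ Beta T X)).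

Lemma hopf_antipode_spec : is_left_antipode hopf_antipode.
Proof.
  split; [|split; [|split]].
  - move=> X X' Y f. rewrite /hopf_antipode curry_comp ihom_map_curry. f_equal.
    rewrite comp_idl. right_assoc.
    rewrite_chain (tensm_interchange (BTm T (ihom_map L (BTm T f) (idm Y))) (Beta T X')).
    rewrite_chain_rev (fusion_inv_natl (Z:=X') (ihom_map L (BTm T f) (idm Y))).
    rewrite BTm_comp_r ev_ihom_map comp_idl BTm_comp. right_assoc.
    rewrite_chain (fusion_inv_natr (A:=ihom L (BT T X) Y) f). tensor_norm. by rewrite Beta_nat.
  - move=> X Y Y' g. rewrite /hopf_antipode curry_comp ihom_map_curry. f_equal. right_assoc.
    rewrite_chain (tensm_interchange (BTm T (ihom_map L (idm (BT T X)) g)) (Beta T X)).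
    rewrite_chain_rev (fusion_inv_natl (Z:=X) (ihom_map L (idm (BT T X)) g)).
    rewrite BTm_comp_r ev_ihom_map tensm_id comp_idr BTm_comp. by tensor_norm.
  - move=> X Y. rewrite /hopf_antipode ev_curry_comp. right_assoc.
    rewrite_chain (tensm_interchange (BTm T (ihom_map L (Bmu T X) (idm Y))) (Beta T (BT T X))).
    rewrite_chain_rev (fusion_inv_natl (Z:=BT T X) (ihom_map L (Bmu T X) (idm Y))).
    rewrite BTm_comp_r (ev_ihom_map L (Bmu T X) (idm Y)) comp_idl (BTm_comp T (idm _ ⊗ Bmu T X)).
    right_assoc. rewrite_chain (fusion_inv_mu (A:=ihom L (BT T X) Y) (X:=X)). tensor_norm.
    rewrite Bmu_etal tensm_id comp_idl fusion_inv_T2 -BTm_comp. f_equal. by rewrite ev_pre_id.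
  - move=> X Y. rewrite ihom_map_coev /hopf_antipode ihom_map_curry curry_comp. f_equal.
    right_assoc. rewrite !tensm_id !comp_idl.
    rewrite_chain (tensm_interchange (BTm T (coev L (BT T X) Y)) (Beta T X)).
    rewrite_chain_rev (fusion_inv_natl (Z:=X) (coev L (BT T X) Y)).
    rewrite BTm_comp_r ev_coev BTm_id comp_idl.
    have fusion_split := fusion_inv_r Y X. rewrite /fusion in fusion_split.
    rewrite_chain fusion_split. by tensor_norm.
Qed.

Section IhomAction.
Variables (M : Ob C) (r : Hom (BT T M) M) (N : Ob C) (t : Hom (BT T N) N).
Hypotheses (r_module : is_module r) (t_module : is_module t).

Definition T2_act Z : Hom (BT T (tens Z M)) (tens (BT T Z) M) := (idm (BT T Z) ⊗ r) ∘ BT2 T Z M.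

Definition T2_act_sect Z : Hom (tens (BT T Z) M) (BT T (tens Z M)) :=
  BTm T (idm Z ⊗ r) ∘ fusion_inv Z M ∘ (idm _ ⊗ Beta T M).

Lemma T2_act_sectK Z : T2_act Z ∘ T2_act_sect Z = idm _.
Proof.
  case: r_module => r_eta r_mu.
  rewrite /T2_act /T2_act_sect. right_assoc. rewrite_chain_rev (BT2_nat T (idm Z) r).
  tensor_norm. rewrite r_mu -(comp_idl (idm (BT T Z))) -comp_tensm.
  have fusion_split := fusion_inv_r Z M. rewrite /fusion in fusion_split.
  rewrite_chain fusion_split. tensor_norm. by rewrite r_eta tensm_id.
Qed.

Lemma T2_act_epi Z N' (P Q : Hom (tens (BT T Z) M) N') : P ∘ T2_act Z = Q ∘ T2_act Z -> P = Q.
Proof.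
  move=> E.
  by rewrite -(comp_idr P) -(comp_idr Q) -(T2_act_sectK Z) (comp_assoc P) (comp_assoc Q) E.
Qed.

Lemma BTm_T2_act_epi Z N' (P Q : Hom (BT T (tens (BT T Z) M)) N') :
  P ∘ BTm T (T2_act Z) = Q ∘ BTm T (T2_act Z) -> P = Q.
Proof.
  move=> E. by rewrite -(comp_idr P) -(comp_idr Q) -BTm_id -(T2_act_sectK Z) BTm_comp !comp_assoc E.
Qed.

Variable h : Hom (BT T (ihom L M N)) (ihom L M N).
Hypothesis ev_mod_hom : is_mod_hom (tens_act h r) t (ev L M N).

Lemma ev_mod_hom_assoc : h ∘ BTm T h = h ∘ Bmu T (ihom L M N).
Proof.
  have ev_act : t ∘ BTm T (ev L M N) = ev L M N ∘ ((h ⊗ r) ∘ BT2 T (ihom L M N) M) :=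
    ev_mod_hom.
  case: r_module => _ r_mu. case: t_module => _ t_mu.
  set A := ihom L M N.
  apply: ev_inj. apply: (T2_act_epi (BT T A)). apply: (BTm_T2_act_epi A).
  transitivity (t ∘ BTm T (ev L M N) ∘ Bmu T (tens A M)).
  - rewrite /T2_act. tensor_norm. rewrite (tensm_comp_last h (BTm T h) r). right_assoc.
    rewrite_chain (BT2_natl T (B:=M) h). rewrite_chain_rev ev_act.
    rewrite !BTm_comp_r -BTm_comp. tensor_norm.
    rewrite -ev_act BTm_comp. rewrite_chain t_mu. by rewrite_chain_rev (Bmu_nat T (ev L M N)).
  - rewrite /T2_act. right_assoc. rewrite (BTm_comp T (BT2 T A M) (idm _ ⊗ r)). right_assoc.
    rewrite_chain_rev (BT2_natr T (A:=BT T A) r). tensor_norm.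
    rewrite r_mu -(comp_tensm (Bmu T A) h (Bmu T M) r). right_assoc.
    rewrite_chain_rev (Bmu_T2 T A M). by rewrite_chain_rev ev_act.
Qed.

Lemma curry_mod_hom Z (z : Hom (BT T Z) Z) (f : Hom (tens Z M) N) :
  is_mod_hom (tens_act z r) t f -> is_mod_hom z h (curry L f).
Proof.
  have ev_act : t ∘ BTm T (ev L M N) = ev L M N ∘ ((h ⊗ r) ∘ BT2 T (ihom L M N) M) :=
    ev_mod_hom.
  rewrite /is_mod_hom /tens_act => f_hom.
  apply: ev_inj. apply: (T2_act_epi Z). rewrite /T2_act.
  transitivity (f ∘ ((z ⊗ r) ∘ BT2 T Z M)); last first.
  { right_assoc. rewrite_chain (ev_curry_comp L f z). by tensor_norm. }
  rewrite -f_hom. tensor_norm. rewrite (tensm_comp_last h (BTm T (curry L f)) r). right_assoc.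
  rewrite_chain (BT2_natl T (B:=M) (curry L f)). rewrite_chain_rev ev_act.
  by rewrite -BTm_comp ev_curry.
Qed.

Lemma left_ihom_of_ev_mod_hom :
  h ∘ Beta T (ihom L M N) = idm _ -> is_left_ihom_EM r t h (ev L M N).
Proof.
  move=> h_eta. split; [by split; [|exact: ev_mod_hom_assoc] | split; first exact: ev_mod_hom].
  move=> Z z _ f f_hom. exists (curry L f).
  split; [exact: curry_mod_hom | split; first exact: ev_curry].
  move=> g _ <-. by rewrite curry_ev.
Qed.

End IhomAction.

End LeftHopf.

Section Antipode.
Context {C : SMCat} (L : LeftClosed C) (T : Bimonad C)
  (s : forall X Y : Ob C, Hom (BT T (ihom L (BT T X) Y)) (ihom L X (BT T Y)))
  (s_antipode : is_left_antipode s).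

Definition antipode_coev X Y : Hom (BT T X) (ihom L (BT T Y) (BT T (tens X (BT T Y)))) :=
  s (BT T Y) (tens X (BT T Y)) ∘ BTm T (ihom_map L (Bmu T Y) (idm _))
  ∘ BTm T (coev L (BT T Y) X).

Definition antipode_fusion_inv X Y : Hom (tens (BT T X) (BT T Y)) (BT T (tens X (BT T Y))) :=
  ev L (BT T Y) _ ∘ (antipode_coev X Y ⊗ idm (BT T Y)).

Lemma antipode_coev_fusion X Y :
  ihom_map L (idm (BT T Y)) (fusion T X Y) ∘ antipode_coev X Y = coev L (BT T Y) (BT T X).
Proof.
  case: s_antipode => _ [s_natr [_ s_ax2]].
  have coev_mu : ihom_map L (Bmu T Y) (idm (tens X (BT T Y))) ∘ coev L (BT T Y) X
     = ihom_map L (idm _) (idm X ⊗ Bmu T Y) ∘ coev L (BT T (BT T Y)) X.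
  { rewrite !ihom_map_coev. by tensor_norm. }
  rewrite /antipode_coev. right_assoc. rewrite -BTm_comp coev_mu BTm_comp.
  rewrite_chain (s_natr (BT T Y) _ _ (idm X ⊗ Bmu T Y)).
  rewrite ihom_map_comp_r comp_idl fusion_mu ihom_map_id_comp /fusion. right_assoc.
  rewrite_chain_rev (s_ax2 (BT T Y) X).
  by rewrite ihom_map_comp_r comp_idl comp_tensm comp_idl Bmu_etal tensm_id ihom_map_id comp_idl.
Qed.

Lemma fusion_antipode_inv X Y : fusion T X Y ∘ antipode_fusion_inv X Y = idm _.
Proof. rewrite /antipode_fusion_inv comp_assoc ev_post antipode_coev_fusion. exact: ev_coev. Qed.

Lemma antipode_inv_fusion X Y : antipode_fusion_inv X Y ∘ fusion T X Y = idm _.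
Proof.
  case: s_antipode => s_natl [_ [s_ax1 _]].
  set B := tens X (BT T Y).
  rewrite /antipode_fusion_inv /fusion. right_assoc.
  rewrite_chain_rev (tensm_interchange (antipode_coev X Y) (Bmu T Y)).
  rewrite_chain (ev_pre_id L (Y:=BT T B) (Bmu T Y)). tensor_norm.
  rewrite /antipode_coev. right_assoc.
  rewrite_chain_rev (s_natl (BT T Y) (BT T (BT T Y)) B (Bmu T Y)).
  have mu_assoc : BTm T (ihom_map L (BTm T (Bmu T Y)) (idm B)) ∘ BTm T (ihom_map L (Bmu T Y) (idm B))
     = BTm T (ihom_map L (Bmu T (BT T Y)) (idm B)) ∘ BTm T (ihom_map L (Bmu T Y) (idm B)).
  { by rewrite -!BTm_comp !ihom_map_comp Bmu_assoc. }
  rewrite_chain mu_assoc.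
  have T2_nat_coev : (s (BT T (BT T Y)) B ∘ (BTm T (ihom_map L (Bmu T (BT T Y)) (idm B)) ∘
        (BTm T (ihom_map L (Bmu T Y) (idm B)) ∘ BTm T (coev L (BT T Y) X)))) ⊗ idm (BT T (BT T Y))
        ∘ BT2 T X (BT T Y)
     = (s (BT T (BT T Y)) B ∘ BTm T (ihom_map L (Bmu T (BT T Y)) (idm B))) ⊗ idm _
        ∘ BT2 T _ _ ∘ BTm T ((ihom_map L (Bmu T Y) (idm B) ∘ coev L (BT T Y) X) ⊗ idm (BT T Y)).
  { rewrite_chain_rev (BT2_natl T (B:=BT T Y) (ihom_map L (Bmu T Y) (idm B) ∘ coev L (BT T Y) X)).
    rewrite BTm_comp. by tensor_norm. }
  rewrite T2_nat_coev. rewrite_chain_rev (s_ax1 (BT T Y) B). rewrite -BTm_comp. right_assoc.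
  rewrite comp_tensm comp_idl comp_assoc ihom_map_comp Bmu_etal comp_idl ihom_map_id comp_idl.
  by rewrite ev_coev BTm_id.
Qed.

Lemma antipode_left_Hopf : is_left_Hopf T.
Proof.
  move=> X Y. exists (antipode_fusion_inv X Y).
  split; [exact: antipode_inv_fusion | exact: fusion_antipode_inv].
Qed.

Lemma antipode_eta X Y : s X Y ∘ Beta T (ihom L (BT T X) Y) = ihom_map L (Beta T X) (Beta T Y).
Proof.
  case: s_antipode => s_natl [_ [s_ax1 _]].
  apply: ev_inj. rewrite (ev_ihom_map L (Beta T X) (Beta T Y)).
  transitivity (ev L (BT T X) (BT T Y)
    ∘ (s (BT T X) Y ∘ BTm T (ihom_map L (Bmu T X) (idm Y))) ⊗ idm (BT T X)
    ∘ BT2 T (ihom L (BT T X) Y) X ∘ Beta T _).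
  - rewrite -comp_assoc Beta_T2. right_assoc. rewrite comp_tensm comp_idl (ev_pre L (Beta T X)). right_assoc.
    rewrite_chain_rev (s_natl (BT T X) X Y (Beta T X)).
    by rewrite BTm_comp_r ihom_map_comp Bmu_etar comp_idl ihom_map_id BTm_id comp_idl.
  - rewrite -(s_ax1 X Y) Beta_nat (ev_ihom_map L (Beta T X) (idm Y)) comp_idl. by right_assoc.
Qed.

Section Modules.
Variables (M : Ob C) (r : Hom (BT T M) M) (N : Ob C) (t : Hom (BT T N) N).
Hypotheses (r_module : is_module r) (t_module : is_module t).

Definition antipode_ihom_act : Hom (BT T (ihom L M N)) (ihom L M N) :=
  ihom_map L (idm M) t ∘ s M N ∘ BTm T (ihom_map L r (idm N)).

Lemma antipode_ihom_act_eta : antipode_ihom_act ∘ Beta T (ihom L M N) = idm _.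
Proof.
  case: r_module => r_eta _. case: t_module => t_eta _.
  rewrite /antipode_ihom_act. right_assoc. rewrite Beta_nat. rewrite_chain (antipode_eta M N).
  by rewrite !ihom_map_comp_r ihom_map_comp !comp_idr r_eta t_eta ihom_map_id.
Qed.

Lemma antipode_ev_mod_hom : is_mod_hom (tens_act antipode_ihom_act r) t (ev L M N).
Proof.
  case: s_antipode => s_natl [_ [s_ax1 _]]. case: r_module => r_eta r_mu.
  rewrite /is_mod_hom /tens_act /antipode_ihom_act. symmetry.
  right_assoc. rewrite tensm_comp_first. right_assoc.
  rewrite_chain (ev_ihom_map L (idm M) t). tensor_norm.
  rewrite_chain (ev_pre L r (s M N ∘ BTm T (ihom_map L r (idm N)))).
  rewrite_chain_rev (s_natl M (BT T M) N r).
  have r_assoc : BTm T (ihom_map L (BTm T r) (idm N)) ∘ BTm T (ihom_map L r (idm N))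
     = BTm T (ihom_map L (Bmu T M) (idm N)) ∘ BTm T (ihom_map L r (idm N)).
  { by rewrite -!BTm_comp !ihom_map_comp r_mu. }
  rewrite_chain r_assoc.
  have T2_nat_r : (s (BT T M) N ∘ (BTm T (ihom_map L (Bmu T M) (idm N)) ∘ BTm T (ihom_map L r (idm N))))
        ⊗ idm (BT T M) ∘ BT2 T (ihom L M N) M
     = (s (BT T M) N ∘ BTm T (ihom_map L (Bmu T M) (idm N))) ⊗ idm _
        ∘ BT2 T _ _ ∘ BTm T (ihom_map L r (idm N) ⊗ idm M).
  { rewrite_chain_rev (BT2_natl T (B:=M) (ihom_map L r (idm N))). by tensor_norm. }
  rewrite_chain T2_nat_r. rewrite_chain_rev (s_ax1 M N). rewrite -BTm_comp. tensor_norm.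
  by rewrite ihom_map_comp r_eta comp_idl ihom_map_id tensm_id comp_idr.
Qed.

Lemma antipode_left_ihom : is_left_ihom_EM r t antipode_ihom_act (ev L M N).
Proof.
  exact: (left_ihom_of_ev_mod_hom L T antipode_left_Hopf _ _ _ _ r_module t_module _
            antipode_ev_mod_hom antipode_ihom_act_eta).
Qed.

End Modules.

Lemma antipode_EM_left_closed : EM_left_closed_and_U_left_closed L T.
Proof.
  move=> M r r_module N t t_module.
  exists (ihom L M N), (antipode_ihom_act M r N t), (ev L M N).
  split; first exact: antipode_left_ihom.
  exists (idm _). by rewrite curry_ev_idm comp_idl.
Qed.

End Antipode.

Section LeftClosedModules.
Context {C : SMCat} (L : LeftClosed C) (T : Bimonad C).

Lemma EM_left_closed_left_Hopf : EM_left_closed_and_U_left_closed L T -> is_left_Hopf T.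
Proof.
  move=> closed X Y.
  set B := tens X (BT T Y).
  have [H1 [h1 [e1 [[[h1_eta h1_mu] [e1_hom _]] [c1 [_ c1K]]]]]] :=
    closed (BT T Y) (Bmu T Y) (free_module T Y) (BT T B) (Bmu T B) (free_module T B).
  (* the free module map TX -> (H1,h1) extending the mate of η_{X ⊗ TY} *)
  set a := c1 ∘ curry L (Beta T B).
  set phi := h1 ∘ BTm T a.
  set G := e1 ∘ (phi ⊗ idm (BT T Y)).
  have phi_hom : is_mod_hom (Bmu T X) h1 phi.
  { rewrite /is_mod_hom /phi BTm_comp. right_assoc. rewrite_chain h1_mu. by rewrite Bmu_nat. }
  have G_hom : is_mod_hom (tens_act (Bmu T X) (Bmu T Y)) (Bmu T B) G.
  { apply: mod_hom_comp e1_hom. exact: tensm_mod_hom phi_hom (idm_mod_hom T _). }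
  have G_eta : G ∘ (Beta T X ⊗ idm (BT T Y)) = Beta T B.
  { have phi_eta : phi ∘ Beta T X = a.
    { by rewrite /phi -comp_assoc Beta_nat comp_assoc h1_eta comp_idl. }
    rewrite /G -comp_assoc comp_tensm comp_idl phi_eta -(ev_curry_comp L) /a comp_assoc c1K comp_idl.
    exact: ev_curry. }
  exists G. split.
  - rewrite (free_hom_eq T (mod_hom_comp T _ _ _ _ _ (fusion_mod_hom T) G_hom)).
    by rewrite -(comp_assoc G) fusion_eta G_eta Bmu_etar.
  - have [H2 [h2 [e2 [[_ [_ e2_univ]] [c2 [c2K _]]]]]] :=
      closed (BT T Y) (Bmu T Y) (free_module T Y) (tens (BT T X) (BT T Y))
        (tens_act (Bmu T X) (Bmu T Y)) (tens_module T (free_module T X) (free_module T Y)).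
    have [g1 [g1_hom [g1_e2 _]]] := e2_univ (BT T X) (Bmu T X) (free_module T X) _
      (mod_hom_comp T _ _ _ _ _ G_hom (fusion_mod_hom T)).
    have [g2 [g2_hom [g2_e2 _]]] := e2_univ (BT T X) (Bmu T X) (free_module T X) _
      (idm_mod_hom T _).
    have g_eta : g1 ∘ Beta T X = g2 ∘ Beta T X.
    { have curry_eq : curry L e2 ∘ (g1 ∘ Beta T X) = curry L e2 ∘ (g2 ∘ Beta T X).
      { rewrite !curry_comp !tensm_comp_idr (comp_assoc e2 (g1 ⊗ _)) (comp_assoc e2 (g2 ⊗ _)).
        by rewrite g1_e2 g2_e2 comp_idl -(comp_assoc (fusion T X Y)) G_eta fusion_eta. }
      have := f_equal (fun q => c2 ∘ q) curry_eq. by rewrite /= !comp_assoc c2K !comp_idl. }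
    by rewrite -g1_e2 -g2_e2 (free_hom_eq T g1_hom) (free_hom_eq T g2_hom) g_eta.
Qed.

End LeftClosedModules.

Theorem mainTheorem6 (C : SMCat) (L : LeftClosed C) (T : Bimonad C) :
  (is_left_Hopf T <-> EM_left_closed_and_U_left_closed L T) /\
  (EM_left_closed_and_U_left_closed L T <-> has_left_antipode L T) /\
  (forall s : forall X Y : Ob C, Hom (BT T (ihom L (BT T X) Y)) (ihom L X (BT T Y)),
     is_left_antipode s ->
     forall (M : Ob C) (r : Hom (BT T M) M), is_module r ->
     forall (N : Ob C) (t : Hom (BT T N) N), is_module t ->
     is_left_ihom_EM r t
       (ihom_map L (idm M) t ∘ s M N ∘ BTm T (ihom_map L r (idm N)))
       (ev L M N)).
Proof.
  have i_iii (HH : is_left_Hopf T) : has_left_antipode L T :=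
    ex_intro _ _ (hopf_antipode_spec L T HH).
  have iii_ii : has_left_antipode L T -> EM_left_closed_and_U_left_closed L T.
  { by case=> s /antipode_EM_left_closed. }
  have ii_i := EM_left_closed_left_Hopf L T.
  split; [split | split; [split |]].
  - by move/i_iii/iii_ii.
  - exact: ii_i.
  - by move/ii_i/i_iii.
  - exact: iii_ii.
  - move=> s s_antipode M r r_module N t t_module. exact: antipode_left_ihom.
Qed.
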